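(* Let $G$ be a topological group, $m\in\mathbb N\cup\{\infty\}$, $\rho\colon G\to\mathrm{Isom}(\mathbf H^m_{\mathbb C})_o$ a representation, and $x\in\mathbf H^m_{\mathbb C}$ a point with total orbit. Let $\alpha(g_1,g_2,g_3)=\mathrm{Cart}(\rho(g_1)x,\rho(g_2)x,\rho(g_3)x)$. If there exists an alternating $G$-invariant $1$-cochain $\omega\colon G^2\to\mathbb R$ with $\partial\omega=\alpha$, then $\rho$ admits a lift to a homomorphism $\tilde\rho\colon G\to U(1,m)$ (i.e. $\tilde\rho(g)$ induces $\rho(g)$ for every $g$).
   Context: $\mathbf H^m_{\mathbb C}$ is the projectivization of the positive vectors of a separable complex Hilbert space with a strongly non-degenerate Hermitian form $B$ of signature $(1,m)$ (linear in the first variable), with $\cosh d([v],[w])=|B(v,w)|/\sqrt{B(v,v)B(w,w)}$; $U(1,m)$ is the group of $B$-unitary maps, and $\mathrm{Isom}(\mathbf H^m_{\mathbb C})_o=PU(1,m)$. A representation is an orbitally continuous homomorphism. A subset of $\mathbf H^m_{\mathbb C}$ is total if no proper closed complex subspace contains lifts of all its points. The Cartan argument is $\mathrm{Cart}(x,y,z)=\arg\big(B(\tilde x,\tilde y)B(\tilde y,\tilde z)B(\tilde z,\tilde x)\big)\in(-\pi/2,\pi/2)$ for any lifts. A $1$-cochain $\omega$ is alternating if $\omega(l,g)=-\omega(g,l)$ and $G$-invariant if $\omega(hg,hl)=\omega(g,l)$; $\partial\omega(g,l,k)=\omega(l,k)-\omega(g,k)+\omega(g,l)$. *)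

From HB Require Import structures.
From mathcomp Require Import all_boot all_order all_algebra.
From mathcomp Require Import all_classical all_reals all_analysis.
From mathcomp Require Import complex.

Set Implicit Arguments.
Unset Strict Implicit.
Unset Printing Implicit Defensive.

Import Order.TTheory GRing.Theory Num.Theory.
Import numFieldNormedType.Exports.
Local Open Scope ring_scope.
Local Open Scope complex_scope.
Local Open Scope classical_set_scope.

Definition is_topological_group (G : topologicalType)
    (mul : G -> G -> G) (inv : G -> G) (one : G) : Prop :=
  [/\ (forall a b c, mul a (mul b c) = mul (mul a b) c),
      (forall a, mul one a = a),
      (forall a, mul (inv a) a = one),
      continuous (fun p : G * G => mul p.1 p.2) &
      continuous inv].

(* The standard model of the separable complex Hilbert space with a       *)
(* Hermitian form of signature (1,m), m in N u {oo} (None = oo):          *)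
(* sequences z : nat -> C, square summable, with z k = 0 for k > m.       *)
(* B(v,w) = v_0 conj(w_0) - sum_{k>=1} v_k conj(w_k)  (linear in v).     *)

Section Model.
Variable R : realType.

Definition vec := nat -> R[i].

Definition vadd (v w : vec) : vec := fun k => v k + w k.
Definition vscale (a : R[i]) (v : vec) : vec := fun k => a * v k.
Definition vsub (v w : vec) : vec := fun k => v k - w k.

Definition cabs2 (z : R[i]) : R := (complex.Re z) ^+ 2 + (complex.Im z) ^+ 2.

Definition inV (m : option nat) (z : vec) : Prop :=
  (forall n k, m = Some n -> (n < k)%N -> z k = 0) /\
  cvg (series (fun k => cabs2 (z k)) @ \oo).

Definition hnorm2 (z : vec) : R := \big[+%R/0%R]_(0 <= k <oo) cabs2 (z k).

Definition Bre (v w : vec) : R :=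
  complex.Re (v 0%N * (w 0%N)^*) - \big[+%R/0%R]_(1 <= k <oo) complex.Re (v k * (w k)^*).
Definition Bim (v w : vec) : R :=
  complex.Im (v 0%N * (w 0%N)^*) - \big[+%R/0%R]_(1 <= k <oo) complex.Im (v k * (w k)^*).
Definition B (v w : vec) : R[i] := (Bre v w +i* Bim v w).

(* points of H^m_C are represented by their (positive) lifts *)
Definition positive (m : option nat) (v : vec) : Prop := inV m v /\ 0 < Bre v v.

(* the complex hyperbolic distance: cosh d = |B(v,w)| / sqrt(B(v,v) B(w,w)) *)
Definition hdist (v w : vec) : R :=
  let c := Num.sqrt (cabs2 (B v w)) / Num.sqrt (Bre v v * Bre w w) in
  ln (c + Num.sqrt (c ^+ 2 - 1)).

(* Cartan argument: arg of B(x,y)B(y,z)B(z,x), which lies in the open right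
   half plane, so arg = atan (Im / Re) with values in (-pi/2, pi/2). *)
Definition Cart (x y z : vec) : R :=
  let p := B x y * B y z * B z x in atan (complex.Im p / complex.Re p).

Definition Bunitary (m : option nat) (T : vec -> vec) : Prop :=
  [/\ (forall v, inV m v -> inV m (T v)),
      (forall a v w, inV m v -> inV m w ->
          T (vadd (vscale a v) w) = vadd (vscale a (T v)) (T w)),
      (forall v w, inV m v -> inV m w -> T v = T w -> v = w),
      (forall w, inV m w -> exists2 v, inV m v & T v = w) &
      (forall v w, inV m v -> inV m w -> B (T v) (T w) = B v w)].

Definition closed_subspace (m : option nat) (W : set vec) : Prop :=
  [/\ (forall v, W v -> inV m v),
      W (fun _ => 0),
      (forall a v w, W v -> W w -> W (vadd (vscale a v) w)) &
      (forall (s : nat -> vec) v, (forall n, W (s n)) -> inV m v ->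
          (fun n => hnorm2 (vsub (s n) v)) @ \oo --> (0 : R) -> W v)].

End Model.

(* A representation G -> Isom(H^m_C)_o = PU(1,m): each rho g is a chosen
   representative in U(1,m); rho is a homomorphism modulo unit scalars,
   and it is orbitally continuous for the hyperbolic metric. *)
Definition pu_representation (R : realType) (G : topologicalType)
    (mul : G -> G -> G) (m : option nat) (rho : G -> vec R -> vec R) : Prop :=
  [/\ (forall g, Bunitary m (rho g)),
      (forall g h, exists2 lam : R[i], cabs2 lam = 1 &
          forall v, inV m v -> rho (mul g h) v = vscale lam (rho g (rho h v))) &
      (forall y, positive m y -> forall (g0 : G) (eps : R), 0 < eps ->
          \forall g \near g0, hdist (rho g y) (rho g0 y) < eps)].

Definition total_orbit (R : realType) (G : Type) (m : option nat)
    (rho : G -> vec R -> vec R) (x : vec R) : Prop :=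
  forall W : set (vec R), closed_subspace m W ->
    (forall g, exists2 u, W u & exists2 lam : R[i], lam != 0 & u = vscale lam (rho g x)) ->
    forall v, inV m v -> W v.

(* Normalise each representative rho g of U(1,m) by the unit scalar mu g for
   which B(mu g rho g x, x) has argument -omega(1,g).  For g, h write
   rho(gh) = lam rho g rho h; it suffices to see that
   nu = lam^* mu g mu h (mu(gh))^* equals 1.  The Cartan triple product of the
   orbit points rho(1)x, rho(g)x, rho(gh)x can be computed from the lifts, which
   gives nu times a positive real times exp(i(omega(1,g) + omega(1,h) - omega(1,gh))),
   and from its polar form, which gives a positive real times exp(i Cart).  By the
   coboundary equation and G-invariance, omega(g,gh) = omega(1,h), the two
   exponentials agree, so nu is a positive real of modulus 1.  The geometric input
   is that the triple product of three positive vectors has positive real part: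
   decompose along x and use the reverse Cauchy-Schwarz inequality on the
   negative semi-definite complement of x. *)

From mathcomp Require Import all_boot all_order all_algebra.
From mathcomp Require Import all_classical all_reals all_analysis.
From mathcomp Require Import complex.
From mathcomp Require Import ring lra.
Import Order.TTheory GRing.Theory Num.Theory.
Import numFieldNormedType.Exports.
Set Implicit Arguments.
Unset Strict Implicit.
(* ring_scope is opened last so that [z^*] always means [Num.conj z]; the
   complex_scope [conjc] is convertible to it but defeats rewriting. *)
Local Open Scope complex_scope.
Local Open Scope ring_scope.

Section ComplexFacts.
Variable R : realType.
Implicit Types (a z y w : R[i]) (t : R).

Lemma cabs2_ge0 z : 0 <= cabs2 z.
Proof. by rewrite addr_ge0 ?sqr_ge0. Qed.

Lemma cabs2_gt0 z : z != 0 -> 0 < cabs2 z.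
Proof.
case: z => a b nz; rewrite lt_def cabs2_ge0 andbT.
apply: contra nz; rewrite /cabs2 /= paddr_eq0 ?sqr_ge0 // !sqrf_eq0.
by case/andP => /eqP -> /eqP ->.
Qed.

Lemma cabs2E z : (cabs2 z)%:C = z * z^*.
Proof.
by case: z => a b; apply/eqP; rewrite eq_complex /cabs2 /=; apply/andP; split; apply/eqP; ring.
Qed.

Lemma cabs2M z w : cabs2 (z * w) = cabs2 z * cabs2 w.
Proof. by case: z => a b; case: w => c d; rewrite /cabs2 /=; ring. Qed.

Lemma cabs2J z : cabs2 z^* = cabs2 z.
Proof. by case: z => a b; rewrite /cabs2 /= sqrrN. Qed.

Lemma conjCM z w : (z * w)^* = z^* * w^*.
Proof. exact: rmorphM. Qed.

Lemma conjC_real t : (t%:C)^* = t%:C.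
Proof. exact: conjc_real. Qed.

Lemma real_complexM s t : (s * t)%:C = s%:C * t%:C :> R[i].
Proof. exact: rmorphM. Qed.

Lemma cabs2_real t : cabs2 t%:C = t ^+ 2.
Proof. by rewrite /cabs2 /= expr0n addr0. Qed.

Lemma cabs2D_le z w : cabs2 (z + w) <= 2 * cabs2 z + 2 * cabs2 w.
Proof.
case: z => a b; case: w => c d; rewrite /cabs2 /=.
by have := sqr_ge0 (a - c); have := sqr_ge0 (b - d); nra.
Qed.

Lemma normr_Re_mulJ_le z w : `|complex.Re (z * w^*)| <= cabs2 z + cabs2 w.
Proof.
case: z => a b; case: w => c d; rewrite ler_norml /cabs2 /=.
have := sqr_ge0 (a + c); have := sqr_ge0 (a - c).
have := sqr_ge0 (b + d); have := sqr_ge0 (b - d).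
by move=> *; apply/andP; split; nra.
Qed.

Lemma normr_Im_mulJ_le z w : `|complex.Im (z * w^*)| <= cabs2 z + cabs2 w.
Proof.
case: z => a b; case: w => c d; rewrite ler_norml /cabs2 /=.
have := sqr_ge0 (a + d); have := sqr_ge0 (a - d).
have := sqr_ge0 (b + c); have := sqr_ge0 (b - c).
by move=> *; apply/andP; split; nra.
Qed.

Lemma unit_mulJ z : cabs2 z = 1 -> z * z^* = 1.
Proof. by rewrite -cabs2E => ->. Qed.

Lemma unit_neq0 z : cabs2 z = 1 -> z != 0.
Proof. by apply: contra_eqN => /eqP ->; rewrite /cabs2 /= expr0n addr0 eq_sym oner_eq0. Qed.

Lemma unit_posE z (K P : R) : cabs2 z = 1 -> 0 < K -> 0 <= P ->
  z * K%:C = P%:C -> z = 1.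
Proof.
case: z => a b; rewrite /cabs2 /= => z1 K0 P0 /eqP.
rewrite eq_complex /= => /andP[/eqP aKP /eqP bK0].
have b0 : b = 0 by apply: (mulIf (lt0r_neq0 K0)); rewrite mul0r; lra.
have a0 : 0 <= a by rewrite -(pmulr_lge0 _ K0); lra.
move: z1; rewrite b0 expr0n addr0 => a1.
by apply/eqP; rewrite eq_complex /= eqxx andbT; apply/eqP; nra.
Qed.

Lemma Re_lincomb_mulJ a z y w : complex.Re ((a * z + y) * w^*) =
  complex.Re a * complex.Re (z * w^*) + (- complex.Im a) * complex.Im (z * w^*) + complex.Re (y * w^*).
Proof. by case: a => ? ?; case: z => ? ?; case: y => ? ?; case: w => ? ? /=; ring. Qed.

Lemma Im_lincomb_mulJ a z y w : complex.Im ((a * z + y) * w^*) =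
  complex.Im a * complex.Re (z * w^*) + complex.Re a * complex.Im (z * w^*) + complex.Im (y * w^*).
Proof. by case: a => ? ?; case: z => ? ?; case: y => ? ?; case: w => ? ? /=; ring. Qed.

Lemma discriminant_le (c U W : R) : 0 <= c -> U <= 0 ->
  (forall s, s ^+ 2 * c * U + 2 * s * c + W <= 0) -> c <= U * W.
Proof.
move=> c0 U0; have [->|Uneq0] := eqVneq U 0 => quad_le0.
  have [->|cneq0] := eqVneq c 0; first by rewrite mul0r.
  have := quad_le0 ((1 - W) / (2 * c)).
  have -> : ((1 - W) / (2 * c)) ^+ 2 * c * 0 + 2 * ((1 - W) / (2 * c)) * c + W = 1.
    by field.
  lra.
have Uneg : U < 0 by rewrite lt_neqAle Uneq0.
have := quad_le0 (- U^-1).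
have -> : (- U^-1) ^+ 2 * c * U + 2 * (- U^-1) * c + W = (c - U * W) / - U.
  by field.
by rewrite pmulr_lle0 ?invr_gt0 ?oppr_gt0 // subr_le0.
Qed.

(* B(x,y)B(y,z)B(z,x) for y = al x + u, z = be x + w with u, w orthogonal to x,
   X = B(x,x), U = B(u,u), W = B(w,w) and b = B(u,w). *)
Lemma Re_triple_gt0 (al be b : R[i]) (X U W : R) : 0 < X -> U <= 0 -> W <= 0 ->
  cabs2 b <= U * W -> 0 < cabs2 al * X + U -> 0 < cabs2 be * X + W ->
  0 < complex.Re ((al * X%:C)^* * (al * (be * X%:C)^* + b) * (be * X%:C)).
Proof.
move=> X0 U0 W0 bUW alU beW.
have -> : complex.Re ((al * X%:C)^* * (al * (be * X%:C)^* + b) * (be * X%:C)) =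
    X ^+ 2 * (cabs2 al * cabs2 be * X + complex.Re (al^* * be * b)).
  by rewrite /cabs2; clear; case: al => ? ?; case: be => ? ?; case: b => ? ? /=; ring.
have q2 : cabs2 (al^* * be * b) = cabs2 al * cabs2 be * cabs2 b by rewrite !cabs2M cabs2J.
have Req2 : complex.Re (al^* * be * b) ^+ 2 <= cabs2 (al^* * be * b).
  by rewrite /cabs2 lerDl sqr_ge0.
move: q2 Req2 (cabs2_ge0 b) (cabs2_ge0 al) (cabs2_ge0 be) bUW alU beW.
move: (complex.Re _) (cabs2 (_ * _)) (cabs2 al) (cabs2 be) (cabs2 b) => r q A Bt c.
move=> -> r2 c0 A0 B0 cUW AU BW.
have AX : - U < A * X by lra.
have BX : - W < Bt * X by lra.
have UW : U * W < (A * X) * (Bt * X) by nra.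
have ABX : 0 < A * Bt * X by apply: mulr_gt0; [apply: mulr_gt0|]; nra.
apply: mulr_gt0; first exact: exprn_gt0.
have : r ^+ 2 < (A * Bt * X) ^+ 2.
  have ABc : A * Bt * c <= A * Bt * (U * W) by apply: ler_wpM2l; [apply: mulr_ge0|].
  by nra.
by nra.
Qed.

Definition expi t : R[i] := cos t +i* sin t.

Lemma cabs2_expi t : cabs2 (expi t) = 1.
Proof. exact: cos2Dsin2. Qed.

Lemma expiD s t : expi (s + t) = expi s * expi t.
Proof. by rewrite /expi cosD sinD /=; congr (_ +i* _); ring. Qed.

Lemma expiN t : expi (- t) = (expi t)^*.
Proof. by rewrite /expi cosN sinN. Qed.

Lemma polar_Re_gt0 z : 0 < complex.Re z ->
  z = (Num.sqrt (cabs2 z))%:C * expi (atan (complex.Im z / complex.Re z)).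
Proof.
case: z => a b /= a0; set t := b / a.
have S0 : 0 < Num.sqrt (1 + t ^+ 2) by rewrite sqrtr_gt0; nra.
have cosE : cos (atan t) = (Num.sqrt (1 + t ^+ 2))^-1 := cos_atan t.
have sinE : sin (atan t) = t * cos (atan t).
  by rewrite -[X in X * _](atanK t) /tan mulfVK // cosE invr_neq0 // gt_eqF.
have normE : Num.sqrt (a ^+ 2 + b ^+ 2) = a * Num.sqrt (1 + t ^+ 2).
  have -> : a ^+ 2 + b ^+ 2 = a ^+ 2 * (1 + t ^+ 2) by rewrite /t; field; rewrite gt_eqF.
  by rewrite sqrtrM ?sqr_ge0 // sqrtr_sqr ger0_norm // ltW.
rewrite /cabs2 /= normE /expi sinE cosE; apply/eqP; rewrite eq_complex /=.
by apply/andP; split; apply/eqP; rewrite /t; field; rewrite !gt_eqF.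
Qed.

End ComplexFacts.

Section TailSums.
Variable R : realType.
Implicit Types f g h : R^nat.

Lemma series_cvg_dominated f g : (forall k, `|f k| <= g k) ->
  cvgn (series g) -> cvgn (series f).
Proof.
move=> fg cg; apply: normed_cvg; apply: (series_le_cvg _ _ fg cg) => k //.
exact: le_trans (fg k).
Qed.

Lemma is_cvg_tail f : cvgn (series f) -> cvgn (fun n => \sum_(1 <= k < n) f k).
Proof. by rewrite -(is_cvg_series_restrict 1). Qed.

Lemma lim_tail_lincomb (a b : R) f g h (F : R^nat) :
  (forall k, F k = a * f k + b * g k + h k) ->
  cvgn (series f) -> cvgn (series g) -> cvgn (series h) ->
  limn (fun n => \sum_(1 <= k < n) F k) =
    a * limn (fun n => \sum_(1 <= k < n) f k) +
    b * limn (fun n => \sum_(1 <= k < n) g k) + limn (fun n => \sum_(1 <= k < n) h k).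
Proof.
move=> FE /is_cvg_tail cf /is_cvg_tail cg /is_cvg_tail ch.
rewrite [X in limn X](_ : _ = a *: (fun n => \sum_(1 <= k < n) f k) +
    b *: (fun n => \sum_(1 <= k < n) g k) + (fun n => \sum_(1 <= k < n) h k)); last first.
  apply/funext => n; under eq_bigr do rewrite FE.
  by rewrite !big_split /= -!mulr_sumr.
have caf : cvgn (a *: fun n => \sum_(1 <= k < n) f k) by exact: is_cvgZl_tmp.
have cbg : cvgn (b *: fun n => \sum_(1 <= k < n) g k) by exact: is_cvgZl_tmp.
by rewrite (limD (@is_cvgD _ _ _ _ _ _ _ caf cbg) ch) (limD caf cbg) !limZl_tmp.
Qed.

Lemma lim_tailN f (F : R^nat) : (forall k, F k = - f k) -> cvgn (series f) ->
  limn (fun n => \sum_(1 <= k < n) F k) = - limn (fun n => \sum_(1 <= k < n) f k).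
Proof.
move=> FE /is_cvg_tail cf; rewrite -limN //.
suff -> : (fun n => \sum_(1 <= k < n) F k) = - fun n => \sum_(1 <= k < n) f k by [].
by apply/funext => n; under eq_bigr do rewrite FE; rewrite sumrN.
Qed.

Lemma lim_tail_ge0 f : (forall k, 0 <= f k) -> cvgn (series f) ->
  0 <= limn (fun n => \sum_(1 <= k < n) f k).
Proof.
move=> f0 /is_cvg_tail cf; apply: limr_ge => //.
by apply: nearW => n; apply: sumr_ge0.
Qed.

End TailSums.

Section Form.
Variables (R : realType) (m : option nat).
Implicit Types (u v w : vec R) (a : R[i]).

Definition vzero : vec R := fun _ => 0.

Lemma vadd0 u : vadd u vzero = u.
Proof. by apply/funext => k; rewrite /vadd addr0. Qed.

Lemma inV_zero : inV m vzero.
Proof.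
split=> //; rewrite (_ : series _ = cst 0); first exact: is_cvg_cst.
by apply/funext => n; rewrite /series /= big1 // => k _; rewrite /cabs2 /= expr0n addr0.
Qed.

Lemma inV_lincomb a u v : inV m u -> inV m v -> inV m (vadd (vscale a u) v).
Proof.
move=> [u_supp cu] [v_supp cv]; split.
  by move=> n k mn nk; rewrite /vadd /vscale (u_supp n k) ?(v_supp n k) // mulr0 addr0.
have cb := is_cvg_seriesD (is_cvg_seriesZ (k := 2 * cabs2 a) cu) (is_cvg_seriesZ (k := 2) cv).
apply: series_le_cvg cb => k /=; rewrite ?cabs2_ge0 //.
  by rewrite addr_ge0 // !mulr_ge0 ?cabs2_ge0.
by apply: le_trans (cabs2D_le _ _) _; rewrite cabs2M mulrA; exact: lexx.
Qed.

Lemma inV_scale a u : inV m u -> inV m (vscale a u).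
Proof. by move=> iu; rewrite -[vscale a u]vadd0; apply: inV_lincomb iu inV_zero. Qed.

Lemma is_cvg_series_Re_pair u w : inV m u -> inV m w ->
  cvgn (series (fun k => complex.Re (u k * (w k)^*))).
Proof.
move=> [_ cu] [_ cw]; apply: series_cvg_dominated (is_cvg_seriesD cu cw) => k.
exact: normr_Re_mulJ_le.
Qed.

Lemma is_cvg_series_Im_pair u w : inV m u -> inV m w ->
  cvgn (series (fun k => complex.Im (u k * (w k)^*))).
Proof.
move=> [_ cu] [_ cw]; apply: series_cvg_dominated (is_cvg_seriesD cu cw) => k.
exact: normr_Im_mulJ_le.
Qed.

Lemma B_lincomb a u v w : inV m u -> inV m v -> inV m w ->
  B (vadd (vscale a u) v) w = a * B u w + B v w.
Proof.
move=> iu iv iw.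
have ReE k := Re_lincomb_mulJ a (u k) (v k) (w k).
have ImE k := Im_lincomb_mulJ a (u k) (v k) (w k).
have [cRu cIu] := (is_cvg_series_Re_pair iu iw, is_cvg_series_Im_pair iu iw).
have [cRv cIv] := (is_cvg_series_Re_pair iv iw, is_cvg_series_Im_pair iv iw).
rewrite /B /Bre /Bim /vadd /vscale ReE ImE.
rewrite (lim_tail_lincomb ReE cRu cIu cRv) (lim_tail_lincomb ImE cRu cIu cIv).
clear ReE ImE; case: a => a1 a2; apply/eqP; rewrite eq_complex /=.
by apply/andP; split; apply/eqP; ring.
Qed.

Lemma BJ u w : inV m u -> inV m w -> B w u = (B u w)^*.
Proof.
move=> iu iw; rewrite /B /Bre /Bim /=.
have ReJ k : complex.Re (w k * (u k)^*) = complex.Re (u k * (w k)^*).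
  by case: (u k) => ? ?; case: (w k) => ? ? /=; ring.
have ImJ k : complex.Im (w k * (u k)^*) = - complex.Im (u k * (w k)^*).
  by case: (u k) => ? ?; case: (w k) => ? ? /=; ring.
rewrite ReJ ImJ (lim_tailN ImJ (is_cvg_series_Im_pair iu iw)).
suff -> : (fun n => \sum_(1 <= k < n) complex.Re (w k * (u k)^*)) =
          (fun n => \sum_(1 <= k < n) complex.Re (u k * (w k)^*)).
  by congr (_ +i* _); rewrite opprB addrC opprK.
by apply/funext => n; apply: eq_bigr => k _; rewrite ReJ.
Qed.

Lemma Bim_self u : inV m u -> Bim u u = 0.
Proof. by move=> iu; have /(congr1 (@complex.Im R)) /= := BJ iu iu; lra. Qed.

Lemma B_self u : inV m u -> B u u = (Bre u u)%:C.
Proof. by move=> iu; rewrite /B Bim_self. Qed.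

Lemma B_vzero w : inV m w -> B vzero w = 0.
Proof.
move=> iw; have := B_lincomb 1 inV_zero inV_zero iw.
rewrite (_ : vadd _ _ = vzero); last by apply/funext => k; rewrite /vadd /vscale /vzero mulr0 addr0.
by rewrite mul1r => /(congr1 (fun z => z - B vzero w)); rewrite subrr addrK => /esym.
Qed.

Lemma B_scalel a u w : inV m u -> inV m w -> B (vscale a u) w = a * B u w.
Proof.
by move=> iu iw; rewrite -[vscale a u]vadd0 B_lincomb ?B_vzero ?addr0 //; exact: inV_zero.
Qed.

Lemma B_scaler a u w : inV m u -> inV m w -> B u (vscale a w) = a^* * B u w.
Proof.
move=> iu iw; have iaw := inV_scale a iw.
by rewrite (BJ iaw iu) B_scalel // conjCM (BJ iu iw) conjCK.
Qed.

Lemma Bre_le0_head0 w : inV m w -> w 0%N = 0 -> Bre w w <= 0.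
Proof.
move=> iw w0; rewrite /Bre w0 mul0r /= sub0r oppr_le0.
apply: lim_tail_ge0 (is_cvg_series_Re_pair iw iw) => k.
by rewrite -cabs2E /= cabs2_ge0.
Qed.

Lemma Bre_lincomb_self a u v : inV m u -> inV m v ->
  Bre (vadd (vscale a u) v) (vadd (vscale a u) v) =
    cabs2 a * Bre u u + 2 * complex.Re (a * B u v) + Bre v v.
Proof.
move=> iu iv; set z := vadd _ v; have iz : inV m z := inV_lincomb a iu iv.
have Bzz : B z z = a * (a * B u u + B v u)^* + (a * B u v + B v v)^*.
  by rewrite {1}/z B_lincomb // (BJ iz iu) (BJ iz iv) /z !B_lincomb.
rewrite -[Bre z z]/(complex.Re (B z z)) Bzz (BJ iv iu) !B_self //.
clear Bzz iz z; move: (B u v) (Bre u u) (Bre v v) => b U V.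
by case: a => a1 a2; case: b => b1 b2; rewrite /cabs2 /=; ring.
Qed.

End Form.

Arguments vzero {R}.

Section Geometry.
Variables (R : realType) (m : option nat) (x : vec R).
Hypothesis px : positive m x.
Implicit Types (u v w y z : vec R).

Lemma Bre_orth_le0 u : inV m u -> B u x = 0 -> Bre u u <= 0.
Proof.
move=> iu ux; have [ix x_pos] := px.
(* B is negative semi-definite on vectors with vanishing 0-th coordinate. *)
have x0 : x 0%N != 0 by apply: contraTneq x_pos => /(Bre_le0_head0 ix); rewrite leNgt.
pose t := - u 0%N / x 0%N.
have head0 : vadd (vscale t x) u 0%N = 0 by rewrite /vadd /vscale /t !mulNr divfK // addNr.
have := Bre_le0_head0 (inV_lincomb t ix iu) head0.
rewrite (Bre_lincomb_self t ix iu) (BJ iu ix) ux conjC0 mulr0 /= mulr0 addr0.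
by have := mulr_ge0 (cabs2_ge0 t) (ltW x_pos); lra.
Qed.

Lemma cauchy_schwarz_orth u w : inV m u -> inV m w -> B u x = 0 -> B w x = 0 ->
  cabs2 (B u w) <= Bre u u * Bre w w.
Proof.
move=> iu iw ux wx.
apply: discriminant_le (cabs2_ge0 _) (Bre_orth_le0 iu ux) _ => s.
(* Bre (t u + w) <= 0 along the real line t = s B(u,w)^*. *)
pose t := s%:C * (B u w)^*.
have tuw_x : B (vadd (vscale t u) w) x = 0.
  by rewrite (B_lincomb t iu iw px.1) ux wx mulr0 addr0.
have := Bre_orth_le0 (inV_lincomb t iu iw) tuw_x.
rewrite (Bre_lincomb_self t iu iw) /t cabs2M cabs2_real cabs2J.
have -> : s%:C * (B u w)^* * B u w = (s * cabs2 (B u w))%:C.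
  by rewrite -mulrA [_ * B u w]mulrC -cabs2E rmorphM.
by rewrite /= mulrA.
Qed.

Lemma orth_decomp y : inV m y ->
  exists a u, [/\ inV m u, B u x = 0 & y = vadd (vscale a x) u].
Proof.
move=> iy; have [ix x_pos] := px.
have Xneq0 : (Bre x x)%:C != 0 by apply: contraTneq x_pos => -[->]; rewrite ltxx.
pose a := B y x / (Bre x x)%:C.
exists a, (vadd (vscale (- a) x) y); split.
- exact: inV_lincomb.
- by rewrite (B_lincomb _ ix iy ix) (B_self ix) /a mulNr divfK // addNr.
- by apply/funext => k; rewrite /vadd /vscale mulNr addNKr.
Qed.

Lemma B_triple_Re_gt0 y z : positive m y -> positive m z ->
  0 < complex.Re (B x y * B y z * B z x).
Proof.
move=> [iy y_pos] [iz z_pos]; have [ix x_pos] := px.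
have [al [u [iu ux yE]]] := orth_decomp iy.
have [be [w [iw wx zE]]] := orth_decomp iz.
have xu : B x u = 0 by rewrite (BJ iu ix) ux conjC0.
have xw : B x w = 0 by rewrite (BJ iw ix) wx conjC0.
have yx : B y x = al * (Bre x x)%:C.
  by rewrite yE (B_lincomb _ ix iu ix) ux addr0 (B_self ix).
have zx : B z x = be * (Bre x x)%:C.
  by rewrite zE (B_lincomb _ ix iw ix) wx addr0 (B_self ix).
have yz : B y z = al * (be * (Bre x x)%:C)^* + B u w.
  rewrite {1}yE (B_lincomb _ ix iu iz) (BJ iz ix) zx (BJ iz iu) zE (B_lincomb _ ix iw iu).
  by rewrite xu mulr0 add0r (BJ iu iw) conjCK.
rewrite (BJ iy ix) yx yz zx.
move: y_pos z_pos; rewrite yE zE (Bre_lincomb_self _ ix iu) (Bre_lincomb_self _ ix iw).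
rewrite xu xw mulr0 /= !mulr0 !addr0 => y_pos z_pos.
apply: (Re_triple_gt0 x_pos (Bre_orth_le0 iu ux) (Bre_orth_le0 iw wx)) => //.
exact: cauchy_schwarz_orth.
Qed.

End Geometry.

Section Unitary.
Variables (R : realType) (m : option nat).
Implicit Types (T : vec R -> vec R) (v : vec R).

Lemma Bunitary_vzero T : Bunitary m T -> T vzero = vzero.
Proof.
case=> _ T_lin _ _ _; have := T_lin 1 _ _ (inV_zero R m) (inV_zero R m).
rewrite (_ : vadd _ _ = vzero); last by apply/funext => k; rewrite /vadd /vscale /vzero mulr0 addr0.
move=> T0; apply/funext => k; have := congr1 (fun f => f k) T0.
rewrite /vadd /vscale mul1r => /(congr1 (fun z => z - T vzero k)).
by rewrite subrr addrK => /esym.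
Qed.

Lemma BunitaryZ T a v : Bunitary m T -> inV m v -> T (vscale a v) = vscale a (T v).
Proof.
move=> uT iv; have [_ T_lin _ _ _] := uT.
by rewrite -[vscale a v]vadd0 T_lin ?(Bunitary_vzero uT) ?vadd0 //; exact: inV_zero.
Qed.

Lemma Bunitary_vscale T mu : Bunitary m T -> cabs2 mu = 1 ->
  Bunitary m (fun v => vscale mu (T v)).
Proof.
move=> uT mu1; have [T_in T_lin T_inj T_surj T_B] := uT; split.
- by move=> v iv; apply/inV_scale/T_in.
- move=> a v w iv iw; rewrite T_lin //; apply/funext => k; rewrite /vadd /vscale; ring.
- move=> v w iv iw /(congr1 (vscale mu^*)) TvTw; apply: T_inj => //.
  apply/funext => k; have := congr1 (fun f => f k) TvTw; rewrite /vscale !mulrA.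
  by rewrite [mu^* * mu]mulrC unit_mulJ // !mul1r.
- move=> w iw; have [v iv Tv] := T_surj _ (inV_scale mu^* iw).
  exists v => //; rewrite Tv; apply/funext => k.
  by rewrite /vscale mulrA unit_mulJ // mul1r.
- move=> v w iv iw; have [iTv iTw] := (T_in v iv, T_in w iw).
  rewrite (B_scalel _ iTv (inV_scale mu iTw)) (B_scaler _ iTv iTw) T_B //.
  by rewrite mulrA unit_mulJ // mul1r.
Qed.

Lemma positive_Bunitary T v : Bunitary m T -> positive m v -> positive m (T v).
Proof.
case=> T_in _ _ _ T_B [iv v_pos]; split; first exact: T_in.
by rewrite -[Bre _ _]/(complex.Re (B (T v) (T v))) T_B.
Qed.

End Unitary.

Lemma left_group_mulg1 (G : Type) (mul : G -> G -> G) (inv : G -> G) (one : G) :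
  (forall a b c, mul a (mul b c) = mul (mul a b) c) ->
  (forall a, mul one a = a) -> (forall a, mul (inv a) a = one) ->
  forall a, mul a one = a.
Proof.
move=> mulA mul1g mulVg a.
have mulgV : mul a (inv a) = one.
  by rewrite -[LHS]mul1g -(mulVg (inv a)) -mulA [mul (inv a) _]mulA mulVg mul1g.
by rewrite -(mulVg a) mulA mulgV mul1g.
Qed.

Section ProjectiveLift.
Variables (R : realType) (G : Type) (mul : G -> G -> G) (one : G).
Variables (m : option nat) (rho : G -> vec R -> vec R) (x : vec R) (omega : G -> G -> R).
Hypothesis mulg1 : forall g, mul g one = g.
Hypothesis rho_unitary : forall g, Bunitary m (rho g).
Hypothesis rho_proj_hom : forall g h, exists2 lam : R[i], cabs2 lam = 1 &
  forall v, inV m v -> rho (mul g h) v = vscale lam (rho g (rho h v)).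
Hypothesis px : positive m x.
Hypothesis omega_inv : forall h g l, omega (mul h g) (mul h l) = omega g l.
Hypothesis omega_cobound : forall g l k,
  omega l k - omega g k + omega g l = Cart (rho g x) (rho l x) (rho k x).

Local Notation s g := (B (rho g x) x).
Definition orbit_norm g := Num.sqrt (cabs2 (s g)).
Local Notation r := orbit_norm.

(* Chosen so that B(lift_phase g *: rho g x, x) = exp(-i omega(1,g)) |B(rho g x, x)|. *)
Definition lift_phase g : R[i] := expi (- omega one g) * (s g)^* * ((r g)^-1)%:C.

Lemma positive_orbit g : positive m (rho g x).
Proof. exact: positive_Bunitary. Qed.

Lemma inV_orbit g : inV m (rho g x).
Proof. exact: (positive_orbit g).1. Qed.

Lemma B_orbit_neq0 g : s g != 0.
Proof.
have := B_triple_Re_gt0 px px (positive_orbit g).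
by apply: contraTneq => ->; rewrite mulr0 /= ltxx.
Qed.

Lemma orbit_norm_gt0 g : 0 < r g.
Proof. by rewrite /orbit_norm sqrtr_gt0 cabs2_gt0 // B_orbit_neq0. Qed.

Lemma cabs2_lift_phase g : cabs2 (lift_phase g) = 1.
Proof.
rewrite !cabs2M cabs2_expi cabs2J cabs2_real mul1r exprVn /orbit_norm sqr_sqrtr ?cabs2_ge0 //.
by rewrite mulfV // gt_eqF // cabs2_gt0 // B_orbit_neq0.
Qed.

Lemma B_orbit_polar g : s g = (lift_phase g)^* * expi (- omega one g) * (r g)%:C.
Proof.
rewrite /lift_phase !conjCM conjCK conjC_real.
transitivity ((expi (- omega one g) * (expi (- omega one g))^*) * s g * ((r g)^-1 * r g)%:C).
  by rewrite unit_mulJ ?cabs2_expi // mulVf ?gt_eqF ?orbit_norm_gt0 // mul1r mulr1.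
by rewrite rmorphM; ring.
Qed.

Lemma B_orbit_polarJ g : (s g)^* = lift_phase g * (expi (- omega one g))^* * (r g)%:C.
Proof. by rewrite B_orbit_polar 2!conjCM conjCK conjC_real. Qed.

Lemma rho_one_x : exists2 c : R[i], cabs2 c = 1 & rho one x = vscale c x.
Proof.
have [lam lam1 rho11] := rho_proj_hom one one.
have [_ _ _ rho_surj _] := rho_unitary one.
have [w iw wx] := rho_surj x px.1.
exists lam^*; first by rewrite cabs2J.
have := rho11 w iw; rewrite mulg1 wx => /(congr1 (vscale lam^*)) ->.
by apply/funext => k; rewrite /vscale mulrA [lam^* * lam]mulrC unit_mulJ // mul1r.
Qed.

Section Multiplier.
Variables (g h : G) (lam : R[i]).
Hypothesis lam1 : cabs2 lam = 1.
Hypothesis rho_gh : forall v, inV m v -> rho (mul g h) v = vscale lam (rho g (rho h v)).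

Lemma orbit_triple :
  B (rho one x) (rho g x) * B (rho g x) (rho (mul g h) x) * B (rho (mul g h) x) (rho one x) =
    lam^* * (s g)^* * (s h)^* * s (mul g h).
Proof.
have [c c1 ->] := rho_one_x.
have ix := px.1; have ig := inV_orbit g; have ih := inV_orbit h.
have igh := inV_orbit (mul g h).
have [rho_in _ _ _ rho_B] := rho_unitary g.
rewrite (B_scalel _ ix ig) (BJ ix ig) (B_scaler _ igh ix) rho_gh //.
rewrite (B_scaler _ ig (rho_in _ ih)) rho_B // (BJ ix ih) !conjCK.
set Bg := B x _; set Bh := B x _; set Bgh := B _ x.
transitivity ((c * c^*) * (lam^* * Bg * Bh * Bgh)); first by ring.
by rewrite unit_mulJ // mul1r.
Qed.

Lemma Cart_orbit_triple : Cart (rho one x) (rho g x) (rho (mul g h) x) =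
  omega one g + omega one h - omega one (mul g h).
Proof.
have := omega_inv g one h; rewrite mulg1 => omega_g_gh.
by rewrite -omega_cobound omega_g_gh; lra.
Qed.

Lemma lift_phase_mul : lift_phase (mul g h) * lam = lift_phase g * lift_phase h.
Proof.
pose T := B (rho one x) (rho g x) * B (rho g x) (rho (mul g h) x) *
  B (rho (mul g h) x) (rho one x).
have T_pos : 0 < complex.Re T.
  by rewrite /T; apply: B_triple_Re_gt0; apply: positive_orbit.
have T_polar : T = (Num.sqrt (cabs2 T))%:C * expi (Cart (rho one x) (rho g x) (rho (mul g h) x)).
  exact: polar_Re_gt0 T_pos.
pose nu := lam^* * lift_phase g * lift_phase h * (lift_phase (mul g h))^*.
pose E := expi (omega one g + omega one h - omega one (mul g h)).
have T_E : T = (Num.sqrt (cabs2 T))%:C * E by rewrite {1}T_polar Cart_orbit_triple.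
have T_nu : T = nu * (r g * r h * r (mul g h))%:C * E :> R[i].
  rewrite /T orbit_triple (B_orbit_polarJ g) (B_orbit_polarJ h) (B_orbit_polar (mul g h)).
  by rewrite /E !expiD !expiN !conjCK !real_complexM /nu; ring.
have nu1 : nu = 1.
  apply: (unit_posE _ _ (sqrtr_ge0 _) (mulIf (unit_neq0 (cabs2_expi _)) (etrans (esym T_nu) T_E))).
    by rewrite /nu 3!cabs2M !cabs2J lam1 !cabs2_lift_phase !mulr1.
  by apply: mulr_gt0; [apply: mulr_gt0|]; exact: orbit_norm_gt0.
transitivity (lift_phase (mul g h) * lam * nu); first by rewrite nu1 mulr1.
transitivity ((lam * lam^*) * (lift_phase (mul g h) * (lift_phase (mul g h))^*) *
  (lift_phase g * lift_phase h)); first by rewrite /nu; ring.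
by rewrite !unit_mulJ ?cabs2_lift_phase // !mul1r.
Qed.

End Multiplier.

Lemma lift_mul g h v : inV m v ->
  vscale (lift_phase (mul g h)) (rho (mul g h) v) =
    vscale (lift_phase g) (rho g (vscale (lift_phase h) (rho h v))).
Proof.
move=> iv; have [lam lam1 rho_gh] := rho_proj_hom g h.
have [rho_in _ _ _ _] := rho_unitary h.
rewrite rho_gh // (BunitaryZ _ (rho_unitary g) (rho_in _ iv)).
by apply/funext => k; rewrite /vscale mulrA [RHS]mulrA (lift_phase_mul lam1 rho_gh).
Qed.

End ProjectiveLift.

Theorem mainTheorem5 (R : realType) (G : topologicalType)
    (mul : G -> G -> G) (inv : G -> G) (one : G)
    (m : option nat) (rho : G -> vec R -> vec R) (x : vec R) :
  is_topological_group mul inv one ->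
  pu_representation mul m rho ->
  positive m x ->
  total_orbit m rho x ->
  (exists omega : G -> G -> R,
      [/\ (forall g l, omega l g = - omega g l),
          (forall h g l, omega (mul h g) (mul h l) = omega g l) &
          (forall g l k, omega l k - omega g k + omega g l =
                         Cart (rho g x) (rho l x) (rho k x))]) ->
  exists rho' : G -> vec R -> vec R,
    [/\ (forall g, Bunitary m (rho' g)),
        (forall g h v, inV m v -> rho' (mul g h) v = rho' g (rho' h v)) &
        (forall g, exists2 mu : R[i], cabs2 mu = 1 &
            forall v, inV m v -> rho' g v = vscale mu (rho g v))].
Proof.
move=> [mulA mul1g mulVg _ _] [rho_unitary rho_proj_hom _] px _.
move=> [omega [_ omega_inv omega_cobound]].
have mulg1 := left_group_mulg1 mulA mul1g mulVg.
pose mu := lift_phase one rho x omega.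
have mu1 g : cabs2 (mu g) = 1 := cabs2_lift_phase one omega rho_unitary px g.
exists (fun g v => vscale (mu g) (rho g v)); split.
- by move=> g; apply: Bunitary_vscale.
- exact: lift_mul mulg1 rho_unitary rho_proj_hom px omega_inv omega_cobound.
- by move=> g; exists (mu g).
Qed.
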